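(* If $G$ and $H$ are finite simple graphs without isolated vertices that are both efficient open domination graphs, then $\gamma_{tR}(G\times H)\le 2\rho_o(G)\rho_o(H)$.
   Context: An open packing of $G$ is a set $D$ of vertices with $N(u)\cap N(v)=\emptyset$ for all distinct $u,v\in D$ (open neighborhoods); $\rho_o(G)$ is the maximum size of an open packing. A set $D$ is total dominating if every vertex of $G$ has a neighbor in $D$. $G$ is an efficient open domination graph if it has a total dominating set that is also an open packing. A total Roman dominating function on $G$ is a map $f:V(G)\to\{0,1,2\}$ such that every vertex with label 0 has a neighbor with label 2 and the subgraph induced by vertices with positive labels has no isolated vertices; $\gamma_{tR}(G)$ is the minimum of $\sum_v f(v)$ over such $f$. The direct product $G\times H$ has vertex set $V(G)\times V(H)$, with $(g,h)(g',h')$ an edge iff $gg'\in E(G)$ and $hh'\in E(H)$. *)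

(* A finite simple graph is a symmetric irreflexive
   relation e : rel T on a finType T (vertex set = all of T). *)
From mathcomp Require Import all_boot.
Set Implicit Arguments. Unset Strict Implicit. Unset Printing Implicit Defensive.

Section Graphs.
Variable T : finType.
Implicit Types (e : rel T) (D : {set T}).

Definition simple_graph e := symmetric e /\ irreflexive e.

Definition no_isolated e := forall v : T, exists u : T, e v u.

Definition oneigh e (v : T) : {set T} := [set u | e v u].

Definition open_packing e D : bool :=
  [forall u in D, forall v in D, (u != v) ==> [disjoint oneigh e u & oneigh e v]].

Definition rho_o e : nat := \max_(D : {set T} | open_packing e D) #|D|.

Definition total_dominating e D : bool :=
  [forall v, exists u in D, e v u].

Definition efficient_open_domination e : Prop :=
  exists D : {set T}, total_dominating e D && open_packing e D.

Definition is_TRDF e (f : {ffun T -> 'I_3}) : bool :=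
  [forall v, (val (f v) == 0) ==> [exists u, e v u && (val (f u) == 2)]] &&
  [forall v, (0 < val (f v)) ==> [exists u, e v u && (0 < val (f u))]].

Definition weight (f : {ffun T -> 'I_3}) : nat := \sum_(v : T) val (f v).

(* The default 2*|V| is the weight
   of the constant-2 function, which is a TRDF whenever G has no isolated
   vertices, so the default never affects the value in that case. *)
Definition gamma_tR e : nat :=
  \big[minn/(2 * #|T|)]_(f : {ffun T -> 'I_3} | is_TRDF e f) weight f.

End Graphs.

Definition direct_prod (T1 T2 : finType) (e1 : rel T1) (e2 : rel T2)
  : rel (T1 * T2)%type :=
  fun p q => e1 p.1 q.1 && e2 p.2 q.2.

From mathcomp Require Import all_boot.

Set Implicit Arguments.
Unset Strict Implicit.
Unset Printing Implicit Defensive.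

(* If D1 and D2 are efficient open dominating sets of G and H,
   then D1 x D2 totally dominates G x H, so labelling it by 2 and every other
   vertex by 0 is a total Roman dominating function of weight 2|D1||D2|; and
   D1, D2, being open packings, have at most rho_o(G), rho_o(H) vertices. *)

Lemma geq_bigmin_cond (I : finType) (P : pred I) (F : I -> nat) x j :
  P j -> \big[minn/x]_(i | P i) F i <= F j.
Proof.
move=> Pj; rewrite -big_filter.
have : j \in filter P (index_enum I) by rewrite mem_filter Pj mem_index_enum.
elim: (filter P _) => [//|i s IHs]; rewrite inE big_cons => /predU1P [-> | js].
  exact: geq_minl.
exact: leq_trans (geq_minr _ _) (IHs js).
Qed.

Section TotalDomination.

Variable T : finType.
Implicit Types (e : rel T) (D : {set T}).

Definition twice_indicator D : {ffun T -> 'I_3} :=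
  [ffun v => if v \in D then inord 2 else ord0].

Lemma twice_indicatorE D v : val (twice_indicator D v) = 2 * (v \in D).
Proof. by rewrite ffunE; case: (v \in D) => //=; rewrite inordK. Qed.

Lemma weight_twice_indicator D : weight (twice_indicator D) = 2 * #|D|.
Proof.
rewrite /weight; under eq_bigr => v _ do rewrite twice_indicatorE.
rewrite mulnC -sum_nat_const [RHS]big_mkcond /=.
by apply: eq_bigr => v _; case: (v \in D).
Qed.

(* Every vertex, labelled 0 or not, has a neighbour in D, which is labelled 2. *)
Lemma is_TRDF_twice_indicator e D :
  total_dominating e D -> is_TRDF e (twice_indicator D).
Proof.
move=> /forallP totD.
have nbr2 v : [exists u, e v u && (val (twice_indicator D u) == 2)].
  have /existsP [u /andP [uD evu]] := totD v.
  by apply/existsP; exists u; rewrite evu twice_indicatorE uD.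
apply/andP; split; apply/forallP => v; apply/implyP => _;
  have /existsP [u /andP [evu /eqP fu2]] := nbr2 v;
  by apply/existsP; exists u; rewrite evu fu2.
Qed.

Lemma gamma_tR_le_total_dominating e D :
  total_dominating e D -> gamma_tR e <= 2 * #|D|.
Proof.
move=> /is_TRDF_twice_indicator trdf.
by rewrite -weight_twice_indicator; apply: geq_bigmin_cond.
Qed.

Lemma open_packing_card_le_rho_o e D : open_packing e D -> #|D| <= rho_o e.
Proof. exact: (leq_bigmax_cond (F := fun D => #|D|)). Qed.

End TotalDomination.

Lemma total_dominating_setX (T1 T2 : finType) (e1 : rel T1) (e2 : rel T2)
    (D1 : {set T1}) (D2 : {set T2}) :
  total_dominating e1 D1 -> total_dominating e2 D2 ->
  total_dominating (direct_prod e1 e2) (setX D1 D2).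
Proof.
move=> /forallP totD1 /forallP totD2; apply/forallP => -[g h].
have /existsP [g' /andP [g'D1 eg]] := totD1 g.
have /existsP [h' /andP [h'D2 eh]] := totD2 h.
by apply/existsP; exists (g', h'); rewrite in_setX g'D1 h'D2 /direct_prod /= eg eh.
Qed.

Theorem corollary2p5 (T1 T2 : finType) (e1 : rel T1) (e2 : rel T2) :
  simple_graph e1 -> simple_graph e2 ->
  no_isolated e1 -> no_isolated e2 ->
  efficient_open_domination e1 -> efficient_open_domination e2 ->
  gamma_tR (direct_prod e1 e2) <= 2 * rho_o e1 * rho_o e2.
Proof.
move=> _ _ _ _ [D1 /andP [totD1 packD1]] [D2 /andP [totD2 packD2]].
apply: leq_trans (gamma_tR_le_total_dominating (total_dominating_setX totD1 totD2)) _.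
by rewrite cardsX mulnA leq_mul ?leq_mul2l ?open_packing_card_le_rho_o.
Qed.
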